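(* In the setting described in the context, for every $y\in\mathbb R^p$ and $n\ge1$, $$\widetilde a_{n+1}(y)+2\tau_n\widetilde J(x_n,w_n,y)\le\widetilde a_n(y)-b_n,$$ where $\widetilde J(x,w,y)=F(x,w)+\langle y,H(x)-w\rangle-F(x^\star,w^\star)$, $\widetilde a_n(y)=\frac{\psi}{\psi-1}\|z_{n+1}-x^\star\|^2+\frac1\beta\|y_{n-1}-y\|^2+\omega\delta_{n-1}\|x_n-x_{n-1}\|^2$, and $b_n=-\frac{\tau_n\tau_{n-1}}{\xi}\|\theta_n\|^2+\frac1\beta\|y_n-y_{n-1}\|^2+\omega\delta_{n-1}\|x_n-x_{n-1}\|^2-2\tau_n\Phi_n^y$.
   Context: Let $f:\mathbb{R}^p\to(-\infty,+\infty]$ and $g:\mathbb{R}^q\to(-\infty,+\infty]$ be proper closed convex functions; $f^*$ is the Fenchel conjugate, $\mathrm{dom}$ the effective domain, $\mathrm{Prox}_{\lambda h}(x)=\arg\min_u\{h(u)+\frac{1}{2\lambda}\|u-x\|^2\}$. Let $h:\mathbb R^q\to\mathbb R$ be convex with $L_h$-Lipschitz gradient, and $H:\mathrm{dom}(g)\to\mathrm{dom}(f)$ continuously differentiable with Jacobian $H'$, such that $x\mapsto\langle H(x),y\rangle$ is convex for every $y\in\mathrm{dom}(f^* )$. Set $\Phi(x,y)=h(x)+\langle H(x),y\rangle$ and $\mathcal L(x,y)=g(x)+\Phi(x,y)-f^*(y)$. Assume: (A1) the set of saddle points $\{(x^\star,y^\star)\in\mathrm{dom}(g)\times\mathrm{dom}(f^*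 ):-\nabla_x\Phi(x^\star,y^\star)\in\partial g(x^\star),\ \nabla_y\Phi(x^\star,y^\star)\in\partial f^*(y^\star)\}$ is nonempty, $\mathrm{dom}(g)\times\mathrm{dom}(f^* )\subseteq\mathrm{dom}(\Phi)$, $\mathcal L(x^\star,y^\star)$ finite; (A2) $\Phi(\cdot,y)$ convex differentiable, $\Phi(x,\cdot)$ concave differentiable, and on every pair of bounded sets $\mathcal X,\mathcal Y$ there are $L_{yy},L_{xx}\ge0,L_{xy}>0$ with $\|\nabla_y\Phi(x,y)-\nabla_y\Phi(x,\tilde y)\|\le L_{yy}\|y-\tilde y\|$, $\|\nabla_x\Phi(x,y)-\nabla_x\Phi(\tilde x,\tilde y)\|\le L_{xx}\|x-\tilde x\|+L_{xy}\|y-\tilde y\|$ on $(\mathcal X\cap\mathrm{dom}(g))\times(\mathcal Y\cap\mathrm{dom}(f^* ))$. Let $F(x,w)=g(x)+h(x)+f(w)$, and let $(x^\star,w^\star,y^\star)$ be a fixed point of $\widetilde\Omega=\{(x,w,y)\in\mathrm{dom}(g)\times\mathrm{dom}(f)\times\mathrm{dom}(f^* ): -H'(x)^\top y-\nabla h(x)\in\partial g(x),\ y\in\partial f(w),\ H(x)=w\}$. Algorithm PDAc-L (applied to this $\Phi$): choose $\psi\in(1,1+\sqrt3)$, $\xi>0$, $\varphi>1$ with $\omega:=2\psi-\xi-\frac{\psi^3\varphi}{1+\psi}>0$, $\tau_{\max}>0$, $\nu,\mu\in(0,1)$, $\eta\in[0,1)$, integer $M\ge1$, $\beta>0$, $x_0\in\mathrm{dom}(g)$,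 $y_0\in\mathrm{dom}(f^* )$, $\tau_0\in(0,\tau_{\max}]$; $z_0=x_0$, $\delta_0=1$. For $n\ge1$: $z_n=\frac{\psi-1}{\psi}x_{n-1}+\frac1\psi z_{n-1}$, $x_n=\mathrm{Prox}_{\tau_{n-1}g}(z_n-\tau_{n-1}\nabla_x\Phi(x_{n-1},y_{n-1}))$; with $\tau=\min\{\varphi\tau_{n-1},\tau_{\max}\}$, set $\tau_n=\tau\mu^i$, $y_n=\mathrm{Prox}_{\beta\tau_nf^*}(y_{n-1}+\beta\tau_nH(x_n))$, where $i\ge0$ is the smallest integer with $\frac{\tau_n\tau_{n-1}}{\xi}\|\theta_n\|^2+2\tau_n\Phi_n^y\le\nu r_n+(1-\nu)c_n$, $\theta_n=\nabla_x\Phi(x_n,y_n)-\nabla_x\Phi(x_{n-1},y_{n-1})$, $\Phi_n^y=\Phi(x_n,y_{n-1})+\langle\nabla_y\Phi(x_n,y_{n-1}),y_n-y_{n-1}\rangle-\Phi(x_n,y_n)$ (here $=0$), $r_n=\omega\delta_{n-1}\|x_n-x_{n-1}\|^2+\frac1\beta\|y_n-y_{n-1}\|^2$, $c_n=\frac{\eta}{|\mathcal I_n|}\sum_{i\in\mathcal I_n}r_i$, $\mathcal I_n=\{n-1,\dots,\max\{n-M,1\}\}$ ($c_1:=0$); $\delta_n=\tau_n/\tau_{n-1}$. Define $w_n=\mathrm{Prox}_{f/(\beta\tau_n)}(y_{n-1}/(\beta\tau_n)+H(x_n))$, so that $y_n=y_{n-1}+\beta\tau_n(H(x_n)-w_n)$.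 *)

From HB Require Import structures.
From mathcomp Require Import all_boot all_order all_algebra.
From mathcomp Require Import all_classical all_reals all_analysis.
Import Order.TTheory GRing.Theory Num.Theory.
Import numFieldNormedType.Exports.

Set Implicit Arguments.
Unset Strict Implicit.
Unset Printing Implicit Defensive.

Local Open Scope ring_scope.
Local Open Scope classical_set_scope.

Definition dot (R : realType) (n : nat) (u v : 'rV[R]_n) : R :=
  \sum_(i < n) u 0 i * v 0 i.
Definition sqn (R : realType) (n : nat) (u : 'rV[R]_n) : R := dot u u.
Definition enorm (R : realType) (n : nat) (u : 'rV[R]_n) : R := Num.sqrt (sqn u).
Definition ebounded (R : realType) (n : nat) (A : set 'rV[R]_n) : Prop :=
  exists r : R, forall u, A u -> enorm u <= r.

Definition edom (R : realType) (n : nat) (f : 'rV[R]_n -> \bar R) : set 'rV[R]_n :=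
  [set u | (f u < +oo)%E].
Definition proper_fun (R : realType) (n : nat) (f : 'rV[R]_n -> \bar R) : Prop :=
  (forall u, f u <> -oo%E) /\ (exists u, (f u < +oo)%E).
(* closed = lower semicontinuous = all sublevel sets closed *)
Definition closed_fun (R : realType) (n : nat) (f : 'rV[R]_n -> \bar R) : Prop :=
  forall a : R, closed [set u | (f u <= a%:E)%E].
Definition convex_fun (R : realType) (n : nat) (f : 'rV[R]_n -> \bar R) : Prop :=
  forall (u v : 'rV[R]_n) (t : R), 0 < t < 1 ->
    (f (t *: u + (1 - t) *: v)%R <= t%:E * f u + ((1 - t)%R)%:E * f v)%E.
Definition convex_rfun (R : realType) (n : nat) (f : 'rV[R]_n -> R) : Prop :=
  forall (u v : 'rV[R]_n) (t : R), 0 <= t <= 1 ->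
    f (t *: u + (1 - t) *: v) <= t * f u + (1 - t) * f v.
Definition concave_rfun (R : realType) (n : nat) (f : 'rV[R]_n -> R) : Prop :=
  convex_rfun (fun u => - f u).
Definition fconj (R : realType) (n : nat) (f : 'rV[R]_n -> \bar R) (v : 'rV[R]_n) : \bar R :=
  ereal_sup [set ((dot u v)%:E - f u)%E | u in [set: 'rV[R]_n]].
Definition subdiff (R : realType) (n : nat) (f : 'rV[R]_n -> \bar R) (u v : 'rV[R]_n) : Prop :=
  forall u', (f u + (dot v (u' - u))%:E <= f u')%E.
(* is_prox lam f u p  <->  p = Prox_{lam f}(u) = argmin_v f(v) + ||v-u||^2/(2 lam) *)
Definition is_prox (R : realType) (n : nat) (lam : R) (f : 'rV[R]_n -> \bar R) (u pu : 'rV[R]_n) : Prop :=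
  forall v, (f pu + (sqn (pu - u) / (2 * lam))%:E <= f v + (sqn (v - u) / (2 * lam))%:E)%E.

Definition Phi (R : realType) (p q : nat) (h : 'rV[R]_q -> R) (H : 'rV[R]_q -> 'rV[R]_p)
  (x : 'rV[R]_q) (y : 'rV[R]_p) : R := h x + dot (H x) y.
(* grad_x Phi(x,y) = grad h(x) + H'(x)^T y  (row-vector convention: y *m H'(x)) *)
Definition gradxPhi (R : realType) (p q : nat) (gradh : 'rV[R]_q -> 'rV[R]_q)
  (Hj : 'rV[R]_q -> 'M[R]_(p, q)) (x : 'rV[R]_q) (y : 'rV[R]_p) : 'rV[R]_q :=
  gradh x + y *m Hj x.
Definition gradyPhi (R : realType) (p q : nat) (H : 'rV[R]_q -> 'rV[R]_p)
  (x : 'rV[R]_q) (y : 'rV[R]_p) : 'rV[R]_p := H x.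
(* Phi^y_n with x = x_n, yo = y_{n-1}, yn = y_n *)
Definition Phiy (R : realType) (p q : nat) (h : 'rV[R]_q -> R) (H : 'rV[R]_q -> 'rV[R]_p)
  (x : 'rV[R]_q) (yo yn : 'rV[R]_p) : R :=
  Phi h H x yo + dot (gradyPhi H x yo) (yn - yo) - Phi h H x yn.

Definition omega (R : realType) (psi xi phi : R) : R :=
  2 * psi - xi - psi ^+ 3 * phi / (1 + psi).
Definition delta (R : realType) (tau : nat -> R) (n : nat) : R :=
  if n is n'.+1 then tau n'.+1 / tau n' else 1.
Definition rseq (R : realType) (p q : nat) (om beta : R) (tau : nat -> R)
  (x : nat -> 'rV[R]_q) (y : nat -> 'rV[R]_p) (n : nat) : R :=
  om * delta tau n.-1 * sqn (x n - x n.-1) + beta^-1 * sqn (y n - y n.-1).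
(* c_1 = 0; c_n = eta/|I_n| sum_{i in I_n} r_i, I_n = {max(n-M,1),...,n-1},
   |I_n| = min(M, n-1) *)
Definition cseq (R : realType) (p q : nat) (om beta eta : R) (M : nat) (tau : nat -> R)
  (x : nat -> 'rV[R]_q) (y : nat -> 'rV[R]_p) (n : nat) : R :=
  if (n <= 1)%N then 0
  else eta / (minn M n.-1)%:R * \sum_(maxn (n - M) 1 <= i < n) rseq om beta tau x y i.
(* line-search test at step n for a trial step size t and trial dual point yc
   (yc plays the role of y_n, t of tau_n) *)
Definition ls_cond (R : realType) (p q : nat) (h : 'rV[R]_q -> R) (gradh : 'rV[R]_q -> 'rV[R]_q)
  (H : 'rV[R]_q -> 'rV[R]_p) (Hj : 'rV[R]_q -> 'M[R]_(p, q))
  (om xi nu beta eta : R) (M : nat) (tau : nat -> R)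
  (x : nat -> 'rV[R]_q) (y : nat -> 'rV[R]_p) (n : nat) (t : R) (yc : 'rV[R]_p) : Prop :=
  t * tau n.-1 / xi * sqn (gradxPhi gradh Hj (x n) yc - gradxPhi gradh Hj (x n.-1) (y n.-1))
    + 2 * t * Phiy h H (x n) (y n.-1) yc
  <= nu * (om * delta tau n.-1 * sqn (x n - x n.-1) + beta^-1 * sqn (yc - y n.-1))
     + (1 - nu) * cseq om beta eta M tau x y n.

Definition Fobj (R : realType) (p q : nat) (f : 'rV[R]_p -> \bar R) (g : 'rV[R]_q -> \bar R)
  (h : 'rV[R]_q -> R) (x : 'rV[R]_q) (w : 'rV[R]_p) : \bar R :=
  (g x + (h x)%:E + f w)%E.
Definition Jtil (R : realType) (p q : nat) (f : 'rV[R]_p -> \bar R) (g : 'rV[R]_q -> \bar R)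
  (h : 'rV[R]_q -> R) (H : 'rV[R]_q -> 'rV[R]_p) (xs : 'rV[R]_q) (ws : 'rV[R]_p)
  (x : 'rV[R]_q) (w y : 'rV[R]_p) : \bar R :=
  (Fobj f g h x w + (dot y (H x - w))%:E - Fobj f g h xs ws)%E.
Definition atil (R : realType) (p q : nat) (psi om beta : R) (tau : nat -> R)
  (x z : nat -> 'rV[R]_q) (y : nat -> 'rV[R]_p) (xs : 'rV[R]_q) (n : nat) (yv : 'rV[R]_p) : R :=
  psi / (psi - 1) * sqn (z n.+1 - xs) + beta^-1 * sqn (y n.-1 - yv)
  + om * delta tau n.-1 * sqn (x n - x n.-1).
Definition bn_seq (R : realType) (p q : nat) (h : 'rV[R]_q -> R) (gradh : 'rV[R]_q -> 'rV[R]_q)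
  (H : 'rV[R]_q -> 'rV[R]_p) (Hj : 'rV[R]_q -> 'M[R]_(p, q))
  (om xi beta : R) (tau : nat -> R)
  (x : nat -> 'rV[R]_q) (y : nat -> 'rV[R]_p) (n : nat) : R :=
  - (tau n * tau n.-1 / xi
       * sqn (gradxPhi gradh Hj (x n) (y n) - gradxPhi gradh Hj (x n.-1) (y n.-1)))
  + beta^-1 * sqn (y n - y n.-1) + om * delta tau n.-1 * sqn (x n - x n.-1)
  - 2 * tau n * Phiy h H (x n) (y n.-1) (y n).

From HB Require Import structures.
From mathcomp Require Import all_boot all_order all_algebra.
From mathcomp Require Import all_classical all_reals all_analysis.
From mathcomp Require Import ring lra.
Import Order.TTheory GRing.Theory Num.Theory.
Import numFieldNormedType.Exports.
Set Implicit Arguments.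
Unset Strict Implicit.
Unset Printing Implicit Defensive.

Local Open Scope ring_scope.
Local Open Scope classical_set_scope.

(* Each proximal step is a subgradient inequality: for g at x_{n+1} and at x_n
   (tested at xs and at x_{n+1}), and, through the Moreau decomposition
   y_n = y_{n-1} + beta tau_n (H x_n - w_n) with y_n in the subdifferential of f
   at w_n, for f at w_n (tested at ws = H xs).  Adding the first-order inequality
   of the convex map Phi(., y_n) at x_n and multiplying by 2 tau_n, the primal
   terms form a quadratic expression in the iterates which, once z is eliminated
   through its recursion, is a sum of three squares with nonnegative weights as
   long as tau_n <= phi tau_{n-1}; the dual terms collapse by the three-point
   identity.  Finally Phi^y_n = 0 because Phi is affine in y. *)

Section EuclideanAlgebra.
Variables (R : realType) (n : nat).
Implicit Types (a : R) (u v w : 'rV[R]_n).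

Lemma dotC u v : dot u v = dot v u.
Proof. by apply: eq_bigr => i _; rewrite mulrC. Qed.

Lemma dotZl a u v : dot (a *: u) v = a * dot u v.
Proof. by rewrite /dot mulr_sumr; apply: eq_bigr => i _; rewrite !mxE mulrA. Qed.

Lemma dotDl u w v : dot (u + w) v = dot u v + dot w v.
Proof. by rewrite /dot -big_split; apply: eq_bigr => i _; rewrite !mxE mulrDl. Qed.

Lemma dotBl u w v : dot (u - w) v = dot u v - dot w v.
Proof. by rewrite /dot -sumrB; apply: eq_bigr => i _; rewrite !mxE mulrBl. Qed.

Lemma dotBr u w v : dot v (u - w) = dot v u - dot v w.
Proof. by rewrite dotC dotBl (dotC u) (dotC w). Qed.

Lemma sqn_ge0 u : 0 <= sqn u.
Proof. by apply: sumr_ge0 => i _; rewrite -expr2 sqr_ge0. Qed.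

Lemma sqn_eq0 u : (sqn u == 0) = (u == 0).
Proof.
apply/idP/eqP => [|->]; last by rewrite /sqn /dot big1 // => i _; rewrite mxE mul0r.
rewrite psumr_eq0 => [/allP u0|i _]; last by rewrite -expr2 sqr_ge0.
apply/rowP => i; have := u0 i (mem_index_enum i).
by rewrite mxE /= mulf_eq0 orbb => /eqP.
Qed.

Lemma sqn_segment a u v w :
  sqn (a *: v + (1 - a) *: u - w)
  = sqn (u - w) - 2 * a * dot (w - u) (v - u) + a ^+ 2 * sqn (v - u).
Proof.
rewrite /sqn /dot !mulr_sumr -!sumrN -!big_split /=.
by apply: eq_bigr => i _; rewrite !mxE; ring.
Qed.

End EuclideanAlgebra.

Lemma dot_trmx (R : realType) p q (v : 'rV[R]_q) (A : 'M[R]_(p, q)) (y : 'rV[R]_p) :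
  dot (v *m A^T) y = dot (y *m A) v.
Proof.
rewrite /dot; under eq_bigr do rewrite !mxE mulr_suml.
rewrite exchange_big /=; apply: eq_bigr => j _; rewrite !mxE mulr_suml.
by apply: eq_bigr => i _; rewrite !mxE; ring.
Qed.

Lemma dot_cvg (R : realType) p (F : set_system R) {FF : Filter F} (f : R -> 'rV[R]_p)
   (L y : 'rV[R]_p) : f @ F --> L -> (fun t => dot (f t) y) @ F --> dot L y.
Proof.
move=> fL; apply: (@cvg_big R^o _ +%R 0 predT add_continuous) => // i _.
apply: cvgMr_tmp; exact: (continuous_cvg _ (@coord_continuous R 1 p 0 i L)).
Qed.

Lemma ler_of_forall_leDM (R : realFieldType) (a b c : R) :
  (forall t, 0 < t < 1 -> a <= b + t * c) -> a <= b.
Proof.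
move=> abc; apply/ler_addgt0Pr => e e0.
have k0 : 0 < `|c| + 2 * e by rewrite ltr_wpDl // mulr_gt0.
set t := e / (`|c| + 2 * e).
have tk : t * (`|c| + 2 * e) = e by rewrite divfK // gt_eqF.
have t0 : 0 < t by rewrite divr_gt0.
have te : 0 < t * e by rewrite mulr_gt0.
have tc : t * c <= t * `|c| by rewrite ler_pM2l // ler_norm.
have c0 : 0 <= `|c| by [].
rewrite mulrDr mulrCA in tk.
have t1 : t < 1 by nra.
by apply: le_trans (abc t _) _; [rewrite t0 | rewrite lerD2l; lra].
Qed.

Section ProxCalculus.
Variables (R : realType) (n : nat).
Implicit Types (F : 'rV[R]_n -> \bar R) (lam : R) (u v : 'rV[R]_n).

Lemma edom_fin_num F u : proper_fun F -> edom F u -> F u \is a fin_num.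
Proof. by case=> nF _ Fu; rewrite fin_numE (lt_eqF Fu) andbT; apply/eqP. Qed.

Lemma is_prox_edom lam F u p : proper_fun F -> is_prox lam F u p -> edom F p.
Proof.
case=> nF [v Fv] /(_ v); rewrite /edom /=.
case: (F p) (nF p) => [r _ _ | _ | //]; first by rewrite ltry.
by case: (F v) Fv (nF v) => // r _ _; rewrite /= leye_eq.
Qed.

Lemma is_prox_subdiff lam F u p : 0 < lam -> proper_fun F -> convex_fun F ->
  is_prox lam F u p -> subdiff F p (lam^-1 *: (u - p)).
Proof.
move=> lam0 Fprop Fcvx Fprox v; rewrite dotZl.
(* Test the prox inequality at [t *: v + (1 - t) *: p] and let [t] tend to 0. *)
have /fineK Fp := edom_fin_num Fprop (is_prox_edom Fprop Fprox).
set fp := fine (F p) in Fp; rewrite -Fp.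
case Fv: (F v) => [fv | | ]; last 2 first.
- by rewrite leey.
- by case: Fprop => /(_ v); rewrite Fv.
rewrite -EFinD lee_fin; set d := dot (u - p) (v - p).
apply: (@ler_of_forall_leDM _ _ _ (sqn (v - p) / (2 * lam))) => t /andP[t0 t1].
set wt := t *: v + (1 - t) *: p.
have cvx : (F wt <= (t * fv + (1 - t) * fp)%:E)%E.
  by have := Fcvx v p t; rewrite t0 t1 Fv -Fp => /(_ isT).
have := le_trans (Fprox wt) (leeD2r _ cvx).
rewrite -Fp -!EFinD lee_fin /wt sqn_segment -/wt => opt.
have E : (sqn (p - u) - 2 * t * dot (u - p) (v - p) + t ^+ 2 * sqn (v - p)) / (2 * lam)
    = sqn (p - u) / (2 * lam) - t * (lam^-1 * d) + t * (t * (sqn (v - p) / (2 * lam))).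
  by rewrite /d; field; rewrite gt_eqF.
rewrite E mulrBl mul1r in opt.
by rewrite -(ler_pM2l t0) !mulrDr; lra.
Qed.

Lemma subdiff_fine_le F u v u' : proper_fun F -> subdiff F u v -> edom F u -> edom F u' ->
  fine (F u) + dot v (u' - u) <= fine (F u').
Proof.
move=> Fprop sub /(edom_fin_num Fprop)/fineK Fu /(edom_fin_num Fprop)/fineK Fu'.
by have := sub u'; rewrite -Fu -Fu' -EFinD lee_fin.
Qed.

Lemma is_prox_le lam F u p v : 0 < lam -> proper_fun F -> convex_fun F ->
  is_prox lam F u p -> edom F v -> fine (F p) + lam^-1 * dot (u - p) (v - p) <= fine (F v).
Proof.
move=> lam0 Fprop Fcvx Fprox; rewrite -dotZl.
exact: subdiff_fine_le Fprop (is_prox_subdiff lam0 Fprop Fcvx Fprox) (is_prox_edom Fprop Fprox).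
Qed.

Lemma fconj_ge_dot F u v : ((dot u v)%:E - F u <= fconj F v)%E.
Proof. by apply: ereal_sup_ubound; exists u. Qed.

Lemma subdiff_fconj_le F u v a : (forall w, F w <> -oo%E) -> subdiff F u v ->
  F u = a%:E -> (fconj F v <= (dot u v - a)%:E)%E.
Proof.
move=> nF sub Fu; apply: ge_ereal_sup => _ [w _ <-].
case Fw: (F w) (nF w) (sub w) => [fw | | //] _; last by rewrite leNye.
by rewrite Fu -EFinD -EFinB !lee_fin dotBr (dotC u) (dotC w); lra.
Qed.

Lemma subdiff_edom_fconj F u v : proper_fun F -> subdiff F u v -> edom F u ->
  edom (fconj F) v.
Proof.
move=> Fprop sub /(edom_fin_num Fprop)/fineK/esym Fu.
exact: le_lt_trans (subdiff_fconj_le Fprop.1 sub Fu) (ltry _).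
Qed.

Lemma sqn_complete_square (sig : R) (c u v : 'rV[R]_n) : sig != 0 ->
  dot u v + sqn (v - c) / (2 * sig)
  = dot u (c - sig *: u) + sqn (c - sig *: u - c) / (2 * sig)
    + sqn (v - (c - sig *: u)) / (2 * sig).
Proof.
move=> sig0; rewrite /sqn /dot !mulr_suml -!big_split /=.
by apply: eq_bigr => i _; rewrite !mxE; field.
Qed.

Lemma is_prox_fconj_moreau (f : 'rV[R]_n -> \bar R) (sig : R) (y0 hx w y1 : 'rV[R]_n) :
  0 < sig -> proper_fun f -> convex_fun f ->
  is_prox sig^-1 f (sig^-1 *: y0 + hx) w -> is_prox sig (fconj f) (y0 + sig *: hx) y1 ->
  y1 = y0 + sig *: (hx - w) /\ subdiff f w y1.
Proof.
(* [yh] below is a subgradient of f at w, so it attains the Fenchel-Young bound;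
   comparing the prox objectives of f^* at y1 and at yh leaves sqn (y1 - yh) <= 0. *)
move=> sig0 fprop fcvx wprox yprox.
have sig'0 : 0 < sig^-1 by rewrite invr_gt0.
set c := y0 + sig *: hx; set yh := c - sig *: w.
have yhE : yh = y0 + sig *: (hx - w) by rewrite /yh /c scalerBr addrA.
have sub : subdiff f w yh.
  have := is_prox_subdiff sig'0 fprop fcvx wprox; rewrite invrK.
  by rewrite scalerBr scalerDr scalerA divff ?gt_eqF // scale1r.
have /fineK/esym fw := edom_fin_num fprop (is_prox_edom fprop wprox).
have up := subdiff_fconj_le fprop.1 sub fw.
have low := fconj_ge_dot f w y1; rewrite fw -EFinB in low.
have := le_trans (leeD2r _ low) (le_trans (yprox yh) (leeD2r _ up)).
rewrite -!EFinD lee_fin => key.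
have signz : sig != 0 by rewrite gt_eqF.
have := sqn_complete_square c w y1 signz.
have := sqn_complete_square c w yh signz; rewrite -/yh.
have /eqP sqn0 : sqn (0 : 'rV[R]_n) == 0 by rewrite sqn_eq0.
rewrite subrr sqn0 mul0r addr0 => _ sq.
have : sqn (y1 - yh) / (2 * sig) <= 0 by lra.
rewrite pmulr_lle0 ?invr_gt0 ?mulr_gt0 // => y1yh.
have : sqn (y1 - yh) == 0 by rewrite eq_le y1yh sqn_ge0.
by rewrite sqn_eq0 subr_eq0 => /eqP ->.
Qed.

End ProxCalculus.

Lemma convex_rfun_slope_le (R : realType) n (F : 'rV[R]_n -> R) (x v : 'rV[R]_n) (L : R) :
  convex_rfun F -> (fun t => t^-1 * (F (t *: v + x) - F x)) @ 0^'+ --> L ->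
  F x + L <= F (v + x).
Proof.
move=> Fcvx FL; rewrite addrC -lerBrDr; apply: (cvgr_to_le FL); near=> t.
have t0 : 0 < t by near: t; exact: nbhs_right_gt.
have t1 : t < 1 by near: t; exact: nbhs_right_lt.
have := Fcvx (v + x) x t; rewrite (ltW t0) (ltW t1) => /(_ isT).
have -> : t *: (v + x) + (1 - t) *: x = t *: v + x.
  by apply/rowP => i; rewrite !mxE; ring.
move=> cvx.
by rewrite ler_pdivrMl // mulrBr; lra.
Unshelve. all: by end_near.
Qed.

Section CouplingFunction.
Variables (R : realType) (p q : nat).
Variables (h : 'rV[R]_q -> R) (gradh : 'rV[R]_q -> 'rV[R]_q).
Variables (H : 'rV[R]_q -> 'rV[R]_p) (Hj : 'rV[R]_q -> 'M[R]_(p, q)).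
Variables (x : 'rV[R]_q) (y : 'rV[R]_p).
Hypotheses (h_diff : differentiable h x) (dhE : forall v, 'd h x v = dot (gradh x) v).
Hypotheses (H_diff : differentiable H x) (dHE : forall v, 'd H x v = v *m (Hj x)^T).

Lemma Phi_slope_cvg v :
  (fun t => t^-1 * (Phi h H (t *: v + x) y - Phi h H x y)) @ 0^'
  --> dot (gradxPhi gradh Hj x y) v.
Proof.
have dh : (fun t : R => t^-1 *: ((h \o shift x) (t *: v) - h x)) @ 0^' --> 'D_v h x.
  exact: diff_derivable.
have dH : (fun t : R => t^-1 *: ((H \o shift x) (t *: v) - H x)) @ 0^' --> 'D_v H x.
  exact: diff_derivable.
rewrite deriveE // dhE in dh; rewrite deriveE // dHE in dH.
rewrite /gradxPhi dotDl -dot_trmx.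
apply: cvg_trans (cvgD dh (dot_cvg (y := y) dH)); apply: near_eq_cvg; near=> t.
by rewrite /Phi fctE /= dotZl dotBl [_ *: _]/GRing.scale /=; ring.
Unshelve. all: by end_near.
Qed.

Lemma Phi_first_order u : convex_rfun (Phi h H ^~ y) ->
  Phi h H x y + dot (gradxPhi gradh Hj x y) (u - x) <= Phi h H u y.
Proof.
move=> cvx; rewrite -{2}(subrK x u).
exact/(convex_rfun_slope_le cvx)/cvg_dnbhs_at_right/Phi_slope_cvg.
Qed.

End CouplingFunction.

(* [m] is the last summand of [omega ps xi ph]; the weight of the middle square
   is nonnegative exactly when tn <= ph * tp. *)
Lemma primal_sos_identity (R : realType) (x1 x0 zp z1 z2 s n1 n0 ps tn tp xi ph m : R) :
  ps != 0 -> ps - 1 != 0 -> 1 + ps != 0 -> ph != 0 -> xi != 0 -> tp != 0 ->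
  z1 = (ps - 1) / ps * x0 + ps^-1 * zp -> z2 = (ps - 1) / ps * x1 + ps^-1 * z1 ->
  m = ps ^+ 3 * ph / (1 + ps) ->
  ps / (ps - 1) * (z1 - s) ^+ 2 + tn * tp / xi * (n1 - n0) ^+ 2
  + 2 * ((z1 - tn * n1 - x1) * (s - x1)) + 2 * (tn / tp) * ((zp - tp * n0 - x0) * (x1 - x0))
  + 2 * tn * (n1 * (s - x0))
  - (ps / (ps - 1) * (z2 - s) ^+ 2 + omega ps xi ph * (tn / tp) * (x1 - x0) ^+ 2)
  = tn / tp / m * (m * (x0 - z1) + (ps - m) * (x1 - z1)) ^+ 2
    + (1 + ps) / ps * (1 - tn / tp / ph) * (x1 - z1) ^+ 2
    + tn / (xi * tp) * (tp * (n1 - n0) - xi * (x0 - x1)) ^+ 2.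
Proof.
move=> ? ? ? ? ? ? -> -> ->; rewrite /omega; field.
by apply/and5P; split => //; apply/andP.
Qed.

Lemma primal_step_ineq (R : realType) q (x1 x0 zp z1 z2 s n1 n0 : 'rV[R]_q) (ps tn tp xi ph : R) :
  1 < ps -> 0 < xi -> 0 < tp -> 0 < tn -> tn <= ph * tp ->
  z1 = ((ps - 1) / ps) *: x0 + ps^-1 *: zp -> z2 = ((ps - 1) / ps) *: x1 + ps^-1 *: z1 ->
  ps / (ps - 1) * sqn (z2 - s) + omega ps xi ph * (tn / tp) * sqn (x1 - x0)
  <= ps / (ps - 1) * sqn (z1 - s) + tn * tp / xi * sqn (n1 - n0)
     + 2 * dot (z1 - tn *: n1 - x1) (s - x1)
     + 2 * (tn / tp) * dot (zp - tp *: n0 - x0) (x1 - x0) + 2 * tn * dot n1 (s - x0).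
Proof.
move=> ps1 xi0 tp0 tn0 tn_le hz1 hz2.
have ps0 : 0 < ps by lra.
have psB1 : 0 < ps - 1 by lra.
have psD1 : 0 < 1 + ps by lra.
have ph0 : 0 < ph by rewrite -(pmulr_lgt0 _ tp0); lra.
have [m mE m0] : exists2 m, m = ps ^+ 3 * ph / (1 + ps) & 0 < m.
  by exists (ps ^+ 3 * ph / (1 + ps)); rewrite // divr_gt0 ?mulr_gt0 ?exprn_gt0.
have c1 : 0 <= tn / tp / m := ltW (divr_gt0 (divr_gt0 tn0 tp0) m0).
have c2 : 0 <= (1 + ps) / ps * (1 - tn / tp / ph).
  by rewrite mulr_ge0 ?subr_ge0 ?ler_pdivrMr ?mul1r ?ler_pdivrMr // ltW ?divr_gt0.
have c3 : 0 <= tn / (xi * tp) := ltW (divr_gt0 tn0 (mulr_gt0 xi0 tp0)).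
rewrite /sqn /dot !mulr_sumr -!big_split /=; apply: ler_sum => i _; rewrite !mxE -!expr2.
have z1i : z1 0 i = (ps - 1) / ps * x0 0 i + ps^-1 * zp 0 i by rewrite hz1 !mxE.
have z2i : z2 0 i = (ps - 1) / ps * x1 0 i + ps^-1 * z1 0 i by rewrite hz2 !mxE.
rewrite -subr_ge0 (primal_sos_identity (s 0 i) (n1 0 i) (n0 0 i) tn (lt0r_neq0 ps0)
  (lt0r_neq0 psB1) (lt0r_neq0 psD1) (lt0r_neq0 ph0) (lt0r_neq0 xi0) (lt0r_neq0 tp0) z1i z2i mE).
by apply: addr_ge0; [apply: addr_ge0|]; apply: mulr_ge0 _ (sqr_ge0 _).
Qed.

Lemma dual_step_identity (R : realType) p (yp y1 yv hx w : 'rV[R]_p) (tn beta : R) :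
  beta != 0 -> y1 = yp + (beta * tn) *: (hx - w) ->
  2 * tn * dot (yv - y1) (hx - w) + beta^-1 * sqn (y1 - yv) + beta^-1 * sqn (y1 - yp)
  = beta^-1 * sqn (yp - yv).
Proof.
move=> beta0 ->; rewrite /sqn /dot !mulr_sumr -!big_split /=.
by apply: eq_bigr => i _; rewrite !mxE; field.
Qed.

Lemma backtracking_step (R : realFieldType) (t phi taumax mu : R) (i : nat) :
  0 < t -> 1 < phi -> 0 < taumax -> 0 < mu < 1 ->
  0 < Num.min (phi * t) taumax * mu ^+ i <= phi * t.
Proof.
move=> t0 phi1 taumax0 /andP[mu0 mu1].
have min0 : 0 < Num.min (phi * t) taumax by rewrite lt_min taumax0 mulr_gt0 //; lra.
have min_le : Num.min (phi * t) taumax <= phi * t by rewrite ge_min lexx.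
rewrite mulr_gt0 ?exprn_gt0 //= (le_trans _ min_le) // ler_piMr ?exprn_ile1 //.
all: exact: ltW.
Qed.

Lemma Phiy_eq0 (R : realType) p q (h : 'rV[R]_q -> R) (H : 'rV[R]_q -> 'rV[R]_p) x yo yn :
  Phiy h H x yo yn = 0.
Proof. by rewrite /Phiy /Phi /gradyPhi dotBr; ring. Qed.

(* The paper's step n >= 1 is [n.+1] here: x_{n-1}, x_n, x_{n+1} are
   [x n], [x n.+1], [x n.+2], and tau_{n-1}, tau_n are [tau n], [tau n.+1]. *)
Section DescentStep.
Variables (R : realType) (p q : nat).
Variables (f : 'rV[R]_p -> \bar R) (g : 'rV[R]_q -> \bar R).
Variables (h : 'rV[R]_q -> R) (gradh : 'rV[R]_q -> 'rV[R]_q).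
Variables (H : 'rV[R]_q -> 'rV[R]_p) (Hj : 'rV[R]_q -> 'M[R]_(p, q)).
Variables (psi xi phi beta : R) (tau : nat -> R).
Variables (x z : nat -> 'rV[R]_q) (y w : nat -> 'rV[R]_p).
Variables (xs : 'rV[R]_q) (ws yv : 'rV[R]_p) (n : nat).
Hypotheses (f_proper : proper_fun f) (f_convex : convex_fun f).
Hypotheses (g_proper : proper_fun g) (g_convex : convex_fun g).
Hypothesis h_diff : forall u,
  differentiable h u /\ forall v, 'd h u v = dot (gradh u) v.
Hypothesis H_diff : forall u, edom g u ->
  differentiable H u /\ forall v, 'd H u v = v *m (Hj u)^T.
Hypothesis Phi_convex : forall v, edom (fconj f) v -> convex_rfun (fun u => Phi h H u v).
Hypotheses (xs_dom : edom g xs) (ws_dom : edom f ws) (Hxs : H xs = ws).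
Hypotheses (psi_gt1 : 1 < psi) (xi_gt0 : 0 < xi) (beta_gt0 : 0 < beta).
Hypotheses (tau_gt0 : forall k, 0 < tau k) (tau_le : tau n.+1 <= phi * tau n).
Hypothesis z_def : forall k, (1 <= k)%N ->
  z k = ((psi - 1) / psi) *: x k.-1 + psi^-1 *: z k.-1.
Hypothesis x_def : forall k, (1 <= k)%N ->
  is_prox (tau k.-1) g (z k - tau k.-1 *: gradxPhi gradh Hj (x k.-1) (y k.-1)) (x k).
Hypothesis y_prox :
  is_prox (beta * tau n.+1) (fconj f) (y n + (beta * tau n.+1) *: H (x n.+1)) (y n.+1).
Hypothesis w_prox :
  is_prox (beta * tau n.+1)^-1 f ((beta * tau n.+1)^-1 *: y n + H (x n.+1)) (w n.+1).

Lemma dual_step_moreau :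
  y n.+1 = y n + (beta * tau n.+1) *: (H (x n.+1) - w n.+1) /\ subdiff f (w n.+1) (y n.+1).
Proof.
exact: is_prox_fconj_moreau (mulr_gt0 beta_gt0 (tau_gt0 _)) f_proper f_convex w_prox y_prox.
Qed.

Lemma primal_descent :
  2 * tau n.+1 * (fine (g (x n.+1)) + h (x n.+1) - fine (g xs) - h xs
                  + dot (H (x n.+1)) (y n.+1) - dot ws (y n.+1))
  + psi / (psi - 1) * sqn (z n.+3 - xs) + omega psi xi phi * delta tau n.+1 * sqn (x n.+2 - x n.+1)
  <= psi / (psi - 1) * sqn (z n.+2 - xs)
     + tau n.+1 * tau n / xi
       * sqn (gradxPhi gradh Hj (x n.+1) (y n.+1) - gradxPhi gradh Hj (x n) (y n)).
Proof.
have x1_dom := is_prox_edom g_proper (x_def (isT : 0 < n.+1)%N).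
have x2_dom := is_prox_edom g_proper (x_def (isT : 0 < n.+2)%N).
have y1_dom : edom (fconj f) (y n.+1).
  have [_ sub] := dual_step_moreau.
  exact: subdiff_edom_fconj f_proper sub (is_prox_edom f_proper w_prox).
have prox_next := is_prox_le (tau_gt0 _) g_proper g_convex (x_def (isT : 0 < n.+2)%N) xs_dom.
have prox_cur := is_prox_le (tau_gt0 _) g_proper g_convex (x_def (isT : 0 < n.+1)%N) x2_dom.
have [dh dhE] := h_diff (x n.+1); have [dH dHE] := H_diff x1_dom.
have Phi_tangent := Phi_first_order dh dhE dH dHE xs (Phi_convex y1_dom).
have sos := primal_step_ineq xs (gradxPhi gradh Hj (x n.+1) (y n.+1))
  (gradxPhi gradh Hj (x n) (y n)) psi_gt1 xi_gt0 (tau_gt0 n) (tau_gt0 n.+1) tau_le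
  (z_def (isT : 0 < n.+2)%N) (z_def (isT : 0 < n.+3)%N).
rewrite /Phi Hxs /= in prox_next prox_cur Phi_tangent sos *.
set d1 := dot _ (xs - x n.+2) in prox_next sos.
set d2 := dot _ (x n.+2 - x n.+1) in prox_cur sos.
set e := dot _ (xs - x n.+1) in Phi_tangent sos.
have sum_ineq : fine (g (x n.+1)) + h (x n.+1) - fine (g xs) - h xs
    + dot (H (x n.+1)) (y n.+1) - dot ws (y n.+1)
    <= - ((tau n.+1)^-1 * d1 + (tau n)^-1 * d2 + e) by lra.
have tn2 : 0 <= 2 * tau n.+1 by rewrite mulr_ge0 // ltW.
have := ler_wpM2l tn2 sum_ineq.
have -> : 2 * tau n.+1 * - ((tau n.+1)^-1 * d1 + (tau n)^-1 * d2 + e)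
    = - (2 * d1 + 2 * (tau n.+1 / tau n) * d2 + 2 * tau n.+1 * e).
  by field; rewrite !gt_eqF.
rewrite /delta; lra.
Qed.

Lemma dual_descent :
  2 * tau n.+1 * (fine (f (w n.+1)) - fine (f ws) + dot yv (H (x n.+1) - w n.+1)
                  - dot (H (x n.+1)) (y n.+1) + dot ws (y n.+1))
  + beta^-1 * sqn (y n.+1 - yv) + beta^-1 * sqn (y n.+1 - y n)
  <= beta^-1 * sqn (y n - yv).
Proof.
have [y1E sub] := dual_step_moreau.
have f_subgrad := subdiff_fine_le f_proper sub (is_prox_edom f_proper w_prox) ws_dom.
have tn2 : 0 <= 2 * tau n.+1 by rewrite mulr_ge0 // ltW.
have := ler_wpM2l tn2 f_subgrad.
have := dual_step_identity yv (lt0r_neq0 beta_gt0) y1E.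
rewrite dotBl !dotBr (dotC (H _)) (dotC ws).
lra.
Qed.

Lemma atil_descent :
  ((atil psi (omega psi xi phi) beta tau x z y xs n.+2 yv)%:E
     + (2 * tau n.+1)%:E * Jtil f g h H xs ws (x n.+1) (w n.+1) yv
   <= (atil psi (omega psi xi phi) beta tau x z y xs n.+1 yv
       - bn_seq h gradh H Hj (omega psi xi phi) xi beta tau x y n.+1)%:E)%E.
Proof.
have x1_fin := edom_fin_num g_proper (is_prox_edom g_proper (x_def (isT : 0 < n.+1)%N)).
have w_fin := edom_fin_num f_proper (is_prox_edom f_proper w_prox).
rewrite /Jtil /Fobj -(fineK x1_fin) -(fineK w_fin) -(fineK (edom_fin_num g_proper xs_dom)).
rewrite -(fineK (edom_fin_num f_proper ws_dom)) -!EFinD lee_fin.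
rewrite /atil /bn_seq Phiy_eq0 /=.
have /= := primal_descent; have := dual_descent; lra.
Qed.

End DescentStep.

Theorem lemma4p2
  (R : realType) (p q : nat)
  (* f on R^p and g on R^q: proper closed convex *)
  (f : 'rV[R]_p -> \bar R) (g : 'rV[R]_q -> \bar R)
  (f_proper : proper_fun f) (f_closed : closed_fun f) (f_convex : convex_fun f)
  (g_proper : proper_fun g) (g_closed : closed_fun g) (g_convex : convex_fun g)
  (* h convex with L_h-Lipschitz gradient *)
  (h : 'rV[R]_q -> R) (gradh : 'rV[R]_q -> 'rV[R]_q) (Lh : R)
  (h_convex : convex_rfun h)
  (h_diff : forall x : 'rV[R]_q,
      differentiable h x /\ forall v : 'rV[R]_q, 'd h x v = dot (gradh x) v)
  (Lh_ge0 : 0 <= Lh)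
  (h_lip : forall x x' : 'rV[R]_q, enorm (gradh x - gradh x') <= Lh * enorm (x - x'))
  (* H : dom g -> dom f, continuously differentiable with Jacobian Hj *)
  (H : 'rV[R]_q -> 'rV[R]_p) (Hj : 'rV[R]_q -> 'M[R]_(p, q))
  (H_dom : forall x, edom g x -> edom f (H x))
  (H_diff : forall x : 'rV[R]_q, edom g x ->
      differentiable H x /\ forall v : 'rV[R]_q, 'd H x v = v *m (Hj x)^T)
  (Hj_cont : forall x : 'rV[R]_q, edom g x -> Hj @ within (edom g) (nbhs x) --> Hj x)
  (H_convex : forall yv, edom (fconj f) yv -> convex_rfun (fun x => dot (H x) yv))
  (* (A1) *)
  (A1 : exists (xs0 : 'rV[R]_q) (ys0 : 'rV[R]_p),
      edom g xs0 /\ edom (fconj f) ys0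
      /\ subdiff g xs0 (- gradxPhi gradh Hj xs0 ys0)
      /\ subdiff (fconj f) ys0 (gradyPhi H xs0 ys0)
      /\ ((g xs0 + (Phi h H xs0 ys0)%:E - fconj f ys0)%E \is a fin_num))
  (* (A2) *)
  (A2_convex : forall yv, edom (fconj f) yv -> convex_rfun (fun x => Phi h H x yv))
  (A2_concave : forall x, concave_rfun (fun yv => Phi h H x yv))
  (A2_lip : forall (X : set 'rV[R]_q) (Y : set 'rV[R]_p), ebounded X -> ebounded Y ->
      exists Lyy Lxx Lxy : R, 0 <= Lyy /\ 0 <= Lxx /\ 0 < Lxy
      /\ (forall x yv yv', X x -> edom g x -> Y yv -> edom (fconj f) yv ->
            Y yv' -> edom (fconj f) yv' ->
            enorm (gradyPhi H x yv - gradyPhi H x yv') <= Lyy * enorm (yv - yv'))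
      /\ (forall x x' yv yv', X x -> edom g x -> X x' -> edom g x' ->
            Y yv -> edom (fconj f) yv -> Y yv' -> edom (fconj f) yv' ->
            enorm (gradxPhi gradh Hj x yv - gradxPhi gradh Hj x' yv')
              <= Lxx * enorm (x - x') + Lxy * enorm (yv - yv')))
  (* fixed point (xs, ws, ys) of Omega~ *)
  (xs : 'rV[R]_q) (ws ys : 'rV[R]_p)
  (fixpt : edom g xs /\ edom f ws /\ edom (fconj f) ys
      /\ subdiff g xs (- (ys *m Hj xs) - gradh xs)
      /\ subdiff f ws ys /\ H xs = ws)
  (* parameters of PDAc-L *)
  (psi xi phi taumax nu mu eta beta : R) (M : nat)
  (psi_range : 1 < psi < 1 + Num.sqrt 3) (xi_gt0 : 0 < xi) (phi_gt1 : 1 < phi)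
  (omega_gt0 : 0 < omega psi xi phi) (taumax_gt0 : 0 < taumax)
  (nu_range : 0 < nu < 1) (mu_range : 0 < mu < 1) (eta_range : 0 <= eta < 1)
  (M_ge1 : (1 <= M)%N) (beta_gt0 : 0 < beta)
  (* iterates of PDAc-L *)
  (x z : nat -> 'rV[R]_q) (y w : nat -> 'rV[R]_p) (tau : nat -> R)
  (x0_dom : edom g (x 0)) (y0_dom : edom (fconj f) (y 0))
  (tau0_range : 0 < tau 0 <= taumax) (z0_def : z 0 = x 0)
  (z_def : forall n, (1 <= n)%N ->
      z n = ((psi - 1) / psi) *: x n.-1 + psi^-1 *: z n.-1)
  (x_def : forall n, (1 <= n)%N ->
      is_prox (tau n.-1) g (z n - tau n.-1 *: gradxPhi gradh Hj (x n.-1) (y n.-1)) (x n))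
  (linesearch : forall n, (1 <= n)%N ->
      exists i : nat,
        tau n = Num.min (phi * tau n.-1) taumax * mu ^+ i
        /\ is_prox (beta * tau n) (fconj f) (y n.-1 + (beta * tau n) *: H (x n)) (y n)
        /\ ls_cond h gradh H Hj (omega psi xi phi) xi nu beta eta M tau x y n (tau n) (y n)
        /\ (forall j : nat, (j < i)%N -> forall yc : 'rV[R]_p,
              is_prox (beta * (Num.min (phi * tau n.-1) taumax * mu ^+ j)) (fconj f)
                (y n.-1 + (beta * (Num.min (phi * tau n.-1) taumax * mu ^+ j)) *: H (x n)) yc ->
              ~ ls_cond h gradh H Hj (omega psi xi phi) xi nu beta eta M tau x y n
                  (Num.min (phi * tau n.-1) taumax * mu ^+ j) yc))
  (w_def : forall n, (1 <= n)%N ->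
      is_prox (beta * tau n)^-1 f ((beta * tau n)^-1 *: y n.-1 + H (x n)) (w n)) :
  forall (yv : 'rV[R]_p) (n : nat), (1 <= n)%N ->
    ((atil psi (omega psi xi phi) beta tau x z y xs n.+1 yv)%:E
       + (2 * tau n)%:E * Jtil f g h H xs ws (x n) (w n) yv
     <= (atil psi (omega psi xi phi) beta tau x z y xs n yv
         - bn_seq h gradh H Hj (omega psi xi phi) xi beta tau x y n)%:E)%E.
Proof.
move=> yv [//|n] _.
have tau_step k : exists i, tau k.+1 = Num.min (phi * tau k) taumax * mu ^+ i.
  by have [i [-> _]] := linesearch k.+1 isT; exists i.
have tau_gt0 k : 0 < tau k.
  elim: k => [|k IH]; first by case/andP: tau0_range.
  have [i ->] := tau_step k.
  by case/andP: (backtracking_step i IH phi_gt1 taumax_gt0 mu_range).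
have tau_le : tau n.+1 <= phi * tau n.
  have [i ->] := tau_step n.
  by case/andP: (backtracking_step i (tau_gt0 n) phi_gt1 taumax_gt0 mu_range).
have [xs_dom [ws_dom [_ [_ [_ Hxs]]]]] := fixpt.
have [_ [_ [y_prox _]]] := linesearch n.+1 isT.
have [psi_gt1 _] := andP psi_range.
by apply: atil_descent => //; exact: w_def.
Qed.
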